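(* Let $F$ be a field with $\mathrm{char}\,F\neq 2$, let $\lambda\in F$, and let $I_n$ be the $F$-algebra defined in the context. Then $\mathrm{rb}_\lambda(I_n)\le 2$. If $F$ is totally real, then $\mathrm{rb}_\lambda(I_n)=1$. If $F$ is quadratically closed and $n\ge 3$, then $\mathrm{rb}_\lambda(I_n)=2$.
   Context: $I_n$ denotes the $n$-dimensional (non-associative) algebra over $F$ with basis $e_1,\ldots,e_n$ and multiplication given by $e_n\cdot e_n=2e_n$, $e_n\cdot e_j=e_j$, $e_j\cdot e_j=e_n$ for $j=1,\ldots,n-1$, with all other products of basis elements equal to zero (extended bilinearly). A linear operator $R\colon A\to A$ is a Rota--Baxter operator of weight $\lambda\in F$ if $R(x)R(y)=R(R(x)y+xR(y)+\lambda xy)$ for all $x,y\in A$; $\mathrm{RB}_\lambda(A)$ is the set of such operators. The Rota--Baxter $\lambda$-index of $A$ is $\mathrm{rb}_\lambda(A)=\min\{m\in\mathbb{N}\mid \text{for every } R\in\mathrm{RB}_\lambda(A) \text{ there is } k\in\{0,\ldots,m\} \text{ with } R^k(R+\lambda\,\mathrm{id})^{m-k}=0\}$ (and $\infty$ if no such $m$ exists). A field $F$ is totally real if $\nu_1^2+\cdots+\nu_t^2=0$ with $\nu_i\in F$ implies all $\nu_i=0$; it is quadratically closed if every quadratic equation over $F$ has a solution in $F$. *)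

From HB Require Import structures.
From mathcomp Require Import all_boot all_order all_algebra.
Set Implicit Arguments. Unset Strict Implicit. Unset Printing Implicit Defensive.
Import Order.TTheory GRing.Theory Num.Theory.
Local Open Scope ring_scope.

(* Elements of I_n are row vectors x : 'rV[F]_n, coordinate j : 'I_n is the
   coefficient of e_(j+1); the index with value n.-1 is e_n.
   Linear operators are matrices acting on the right: R(x) := x *m R. *)

(* The multiplication of I_n:
   e_n e_n = 2 e_n, e_n e_j = e_j, e_j e_j = e_n (j < n), other products 0. *)
Definition Imul (F : fieldType) (n : nat) (x y : 'rV[F]_n) : 'rV[F]_n :=
  \row_(k < n)
    (if (k : nat) == n.-1 then
       2 * (x 0 k * y 0 k) + \sum_(j < n | (j : nat) != n.-1) x 0 j * y 0 j
     else
       \sum_(m < n | (m : nat) == n.-1) x 0 m * y 0 k).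

Definition is_RB (F : fieldType) (n : nat) (lam : F) (R : 'M[F]_n) : Prop :=
  forall x y : 'rV[F]_n,
    Imul (x *m R) (y *m R) =
    (Imul (x *m R) y + Imul x (y *m R) + lam *: Imul x y) *m R.

Definition rb_ok (F : fieldType) (n : nat) (lam : F) (m : nat) : Prop :=
  forall R : 'M[F]_n, is_RB lam R ->
    exists2 k : nat, (k <= m)%N & R ^+ k * (R + lam%:M) ^+ (m - k) = 0.

Definition rb_le (F : fieldType) (n : nat) (lam : F) (m : nat) : Prop :=
  exists2 m' : nat, (m' <= m)%N & rb_ok n lam m'.

Definition rb_eq (F : fieldType) (n : nat) (lam : F) (m : nat) : Prop :=
  rb_ok n lam m /\ forall m' : nat, (m' < m)%N -> ~ rb_ok n lam m'.

Definition totally_real (F : fieldType) : Prop :=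
  forall s : seq F, \sum_(v <- s) v ^+ 2 = 0 -> all (fun v => v == 0) s.

Definition quadratically_closed (F : fieldType) : Prop :=
  forall a b c : F, a != 0 -> exists x : F, a * x ^+ 2 + b * x + c = 0.

(* Write x_n for the e_n-coordinate of x and <x, y> for the standard bilinear
   form, so that x y = x_n y + <x, y> e_n in I_n.  After cancelling R(x)_n R(y),
   the Rota-Baxter identity says that x_n P(y) lies in the span of e_n and
   R(e_n), where P := R (R + lambda).  Comparing x = e_n with y = e_n shows
   P(y) = y_n P(e_n); looking at the top row of R then forces P(e_n) = 0 when
   2 != 0, hence R (R + lambda) = 0 and rb <= 2.  Once P = 0 the identity reads
   <R x, R x> e_n = S(x, x) R(e_n) with S symmetric; over a totally real field
   this gives R = 0 or R = -lambda.  If i^2 = -1 and n >= 3, the rank-one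
   operator x |-> <x, w> u with u = e_1 + i e_2 and w = (1 - lambda) e_1 + i e_2
   is a Rota-Baxter operator with R != 0 and R + lambda != 0. *)

From mathcomp Require Import all_boot all_order all_algebra.
From mathcomp Require Import ring.
Set Implicit Arguments. Unset Strict Implicit. Unset Printing Implicit Defensive.
Import GRing.Theory.
Local Open Scope ring_scope.

Section Dot.
Variables (K : comPzRingType) (m : nat).
Implicit Types x y z : 'rV[K]_m.

Definition dot x y : K := \sum_j x 0 j * y 0 j.

Lemma dotC x y : dot x y = dot y x.
Proof. by apply: eq_bigr => j _; rewrite mulrC. Qed.

Lemma dotDl x y z : dot (x + y) z = dot x z + dot y z.
Proof. by rewrite /dot -big_split; apply: eq_bigr => j _; rewrite mxE mulrDl. Qed.

Lemma dotZl (a : K) x y : dot (a *: x) y = a * dot x y.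
Proof. by rewrite /dot big_distrr; apply: eq_bigr => j _; rewrite mxE -mulrA. Qed.

Lemma dotDr x y z : dot x (y + z) = dot x y + dot x z.
Proof. by rewrite dotC dotDl !(dotC x). Qed.

Lemma dotZr (a : K) x y : dot x (a *: y) = a * dot x y.
Proof. by rewrite dotC dotZl dotC. Qed.

Lemma dot0l y : dot 0 y = 0.
Proof. by rewrite -(scale0r 0) dotZl mul0r. Qed.

Lemma dot_deltal (i : 'I_m) y : dot (delta_mx 0 i) y = y 0 i.
Proof.
rewrite /dot (bigD1 i) //= big1 ?addr0; first by rewrite mxE !eqxx mul1r.
by move=> j /negbTE ji; rewrite mxE ji andbF mul0r.
Qed.

Lemma mul_rV_tr x y : x *m y^T = (dot x y)%:M.
Proof.
by rewrite [LHS]mx11_scalar mxE; congr _%:M; apply: eq_bigr => j _; rewrite mxE.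
Qed.

End Dot.

Lemma mx_eq0_rV (K : comPzRingType) (m : nat) (A : 'M[K]_m) :
  (forall x : 'rV[K]_m, x *m A = 0) -> A = 0.
Proof. by move=> xA0; apply/row_matrixP => i; rewrite rowE xA0 row0. Qed.

Lemma totally_real_dot_eq0 (F : fieldType) (m : nat) (x : 'rV[F]_m) :
  totally_real F -> dot x x = 0 -> x = 0.
Proof.
move=> TR xx0; have := TR [seq x 0 j | j <- index_enum 'I_m].
rewrite big_map (eq_bigr (fun j => x 0 j * x 0 j)) => [/(_ xx0)/allP xj0|j _].
  by apply/rowP => j; rewrite mxE; apply/eqP/xj0/map_f; rewrite mem_index_enum.
by rewrite expr2.
Qed.

Lemma totally_real_mx_eq0 (F : fieldType) (m : nat) (A : 'M[F]_m) :
  totally_real F -> (forall x : 'rV[F]_m, dot (x *m A) (x *m A) = 0) -> A = 0.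
Proof. by move=> TR xA0; apply: mx_eq0_rV => x; apply: totally_real_dot_eq0. Qed.

Section RotaBaxter.
Variables (F : fieldType) (n : nat) (lam : F).
Implicit Types (x y : 'rV[F]_n.+1) (R : 'M[F]_n.+1).
Local Notation top := (@ord_max n).

Definition e_top : 'rV[F]_n.+1 := delta_mx 0 top.

Lemma e_top_neq0 : e_top != 0.
Proof. by apply/eqP => /rowP/(_ top); rewrite !mxE !eqxx; apply/eqP/oner_neq0. Qed.

Lemma e_top_top : e_top 0 top = 1.
Proof. by rewrite mxE !eqxx. Qed.

Lemma dot_e_top x : dot e_top x = x 0 top.
Proof. exact: dot_deltal. Qed.

Lemma e_top_offtop j : j != top -> e_top 0 j = 0.
Proof. by rewrite mxE eqxx => /negbTE->. Qed.

Lemma rV_offtop0_scalar (v : 'rV[F]_n.+1) :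
  (forall j, j != top -> v 0 j = 0) -> v = v 0 top *: e_top.
Proof.
move=> v0; apply/rowP => j; rewrite !mxE eqxx /=.
by have [->|/v0->] := eqVneq j top; rewrite ?mulr1 ?mulr0.
Qed.

Lemma ImulE x y : Imul x y = x 0 top *: y + dot x y *: e_top.
Proof.
apply/rowP => k; rewrite !mxE; have [kn|kn] := eqVneq (k : nat) n.
  have -> : k = top by apply: val_inj.
  rewrite !eqxx mulr1 /dot [in RHS](bigD1 top) //= mulr2n mulrDl mul1r -addrA.
  by congr (_ + (_ + _)); apply: eq_bigl => j.
have /negbTE-> : k != top by apply: contraNneq kn => ->.
by rewrite mulr0 addr0 (big_pred1 top).
Qed.

Definition rb_form R x y := dot (x *m R) y + dot x (y *m R) + lam * dot x y.

Lemma rb_formC R x y : rb_form R x y = rb_form R y x.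
Proof.
by rewrite /rb_form (dotC (x *m R)) (dotC x (y *m R)) (dotC x y) [dot y _ + _]addrC.
Qed.

Lemma mulmx_RRlam R y : y *m (R * (R + lam%:M)) = y *m R *m R + lam *: (y *m R).
Proof. by rewrite -mulmxE mulmxA mulmxDr mul_mx_scalar. Qed.

(* The Rota-Baxter identity with both sides expanded by [ImulE]; the common
   term [a *: u] stands for R(x)_n R(y). *)
Lemma rb_rearrange (a b c d g xn : F) (u v w f : 'rV[F]_n.+1) :
  (a *: u + b *: w == a *: u + c *: f + (xn *: v + d *: f) + lam *: (xn *: u + g *: f))
  = (xn *: (v + lam *: u) == b *: w - (c + d + lam * g) *: f).
Proof.
rewrite -subr_eq0 -[RHS]subr_eq0 -oppr_eq0; congr (_ == 0).
by apply/rowP => k; rewrite !mxE; ring.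
Qed.

Lemma is_RBE R : is_RB lam R <-> forall x y,
  x 0 top *: (y *m (R * (R + lam%:M))) =
  dot (x *m R) (y *m R) *: e_top - rb_form R x y *: row top R.
Proof.
have E x y : (Imul (x *m R) (y *m R) ==
              (Imul (x *m R) y + Imul x (y *m R) + lam *: Imul x y) *m R) =
  (x 0 top *: (y *m (R * (R + lam%:M))) ==
   dot (x *m R) (y *m R) *: e_top - rb_form R x y *: row top R).
  by rewrite !ImulE !mulmxDl -!scalemxAl !mulmxDl -!scalemxAl -rowE rb_rearrange mulmx_RRlam.
by split=> RB x y; apply/eqP; [rewrite -E | rewrite E]; apply/eqP/RB.
Qed.

Lemma is_RB0 : is_RB lam (0 : 'M[F]_n.+1).
Proof.
by apply/is_RBE => x y; rewrite !(mulmx0, mul0r, row0, scaler0) dot0l scale0r subr0.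
Qed.

Lemma scalar_row_top_mulRRlam R c :
  row top R = c *: e_top -> e_top *m (R * (R + lam%:M)) = c * (c + lam) *: e_top.
Proof.
move=> Rc; rewrite -mulmxE mulmxA -rowE Rc -scalemxAl mulmxDr mul_mx_scalar -rowE Rc.
by rewrite -scalerDl scalerA.
Qed.

Lemma outer_is_RB (u w : 'rV[F]_n.+1) :
  dot u u = 0 -> dot u w = - lam -> w 0 top = 0 -> is_RB lam (w^T *m u).
Proof.
move=> uu uw wtop; have xR x : x *m (w^T *m u) = dot x w *: u.
  by rewrite mulmxA mul_rV_tr mul_scalar_mx.
apply/is_RBE => x y; rewrite mulmx_RRlam !xR rowE xR dot_e_top wtop scale0r scaler0.
rewrite !dotZl !dotZr uu !mulr0 scale0r subr0 uw scalerA -scalerDl.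
by rewrite mulrN [lam * _]mulrC addNr scale0r scaler0.
Qed.

Section RotaBaxterOperator.
Variable R : 'M[F]_n.+1.
Hypothesis RB : is_RB lam R.
Local Notation Q := (R * (R + lam%:M)).

Lemma rb_mulRRlam y : y *m Q = y 0 top *: (e_top *m Q).
Proof.
move/is_RBE: RB => star; have := star e_top y; rewrite e_top_top scale1r => ->.
by rewrite star dotC rb_formC.
Qed.

Lemma rb_scalar_row_top c : (2 : F) != 0 -> row top R = c *: e_top -> c * (c + lam) = 0.
Proof.
move=> two Rc; move/is_RBE: RB => /(_ e_top e_top).
rewrite e_top_top scale1r (scalar_row_top_mulRRlam Rc) -rowE Rc /rb_form -rowE Rc.
rewrite !dotZl !dotZr dot_e_top e_top_top !mulr1 scalerA -scalerBl => /eqP.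
rewrite -subr_eq0 -scalerBl scaler_eq0 (negbTE e_top_neq0) orbF => /eqP eq0.
have /eqP : 2 * (c * (c + lam)) = 0 by rewrite -eq0; ring.
by rewrite mulf_eq0 (negbTE two) => /eqP.
Qed.

Lemma rb_row_top_offtop j :
  j != top -> e_top *m Q != 0 -> R top j = 0.
Proof.
move=> jtop eQ0; move/is_RBE: RB => star.
pose x : 'rV[F]_n.+1 := delta_mx 0 j.
have xtop : x 0 top = 0 by rewrite mxE eqxx eq_sym (negbTE jtop).
have Rjtop : R j top = 0.
  (* R commutes with Q, and x Q = 0 because x_n = 0. *)
  have : (x *m R) *m Q = (x *m Q) *m R by rewrite !mulmx_RRlam mulmxDl scalemxAl.
  rewrite rb_mulRRlam [x *m Q]rb_mulRRlam xtop scale0r mul0mx => /eqP.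
  by rewrite scaler_eq0 (negbTE eQ0) orbF -rowE mxE => /eqP.
have /rowP/(_ j) := star x e_top.
rewrite xtop scale0r !mxE eqxx (negbTE jtop) mulr0 sub0r /rb_form dotC -rowE.
rewrite dot_e_top mxE Rjtop dot_deltal dot_deltal e_top_offtop // mulr0 add0r addr0.
by rewrite -rowE mxE => /esym/eqP; rewrite oppr_eq0 mulf_eq0 orbb => /eqP.
Qed.

Lemma rb_mulRRlam_eq0 : (2 : F) != 0 -> Q = 0.
Proof.
move=> two; apply: mx_eq0_rV => y; rewrite rb_mulRRlam.
have [->|eQ0] := eqVneq (e_top *m Q) 0; first by rewrite scaler0.
have Rc : row top R = R top top *: e_top.
  by rewrite [LHS]rV_offtop0_scalar ?mxE // => j jtop; rewrite mxE rb_row_top_offtop.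
by rewrite (scalar_row_top_mulRRlam Rc) (rb_scalar_row_top two Rc) scale0r eqxx in eQ0.
Qed.

Lemma rb_totally_real : (2 : F) != 0 -> totally_real F -> R = 0 \/ R + lam%:M = 0.
Proof.
move=> two TR; have self x : dot (x *m R) (x *m R) *: e_top = rb_form R x x *: row top R.
  move/is_RBE: RB => /(_ x x); rewrite rb_mulRRlam_eq0 // mulmx0 scaler0.
  by move=> /eqP; rewrite eq_sym subr_eq0 => /eqP.
have [j /andP[jtop Rj] | offtop] := pickP [pred j | (j != top) && (R top j != 0)].
  left; apply: totally_real_mx_eq0 => // x.
  have /rowP/(_ j) := self x; rewrite !mxE eqxx (negbTE jtop) mulr0.
  move/esym/eqP; rewrite mulf_eq0 (negbTE Rj) orbF => /eqP Sxx.
  by have /rowP/(_ top) := self x; rewrite !mxE Sxx mul0r !eqxx mulr1.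
have Rc : row top R = R top top *: e_top.
  rewrite [LHS]rV_offtop0_scalar ?mxE // => j jtop; rewrite mxE.
  by have := offtop j; rewrite /= jtop => /negbFE/eqP.
have norm x : dot (x *m R) (x *m R) = rb_form R x x * R top top.
  by have /rowP/(_ top) := self x; rewrite !mxE !eqxx mulr1.
have /eqP := rb_scalar_row_top two Rc; rewrite mulf_eq0 => /orP[/eqP c0|/eqP clam].
  by left; apply: totally_real_mx_eq0 => // x; rewrite norm c0 mulr0.
right; apply: totally_real_mx_eq0 => // x.
have c_lam : R top top = - lam by apply/eqP; rewrite -addr_eq0 clam.
by rewrite mulmxDr mul_mx_scalar !dotDl !dotDr !dotZl !dotZr norm /rb_form c_lam; ring.
Qed.

End RotaBaxterOperator.

Lemma rb_ok2 : (2 : F) != 0 -> rb_ok n.+1 lam 2.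
Proof. by move=> two R RB; exists 1%N => //; rewrite !expr1 rb_mulRRlam_eq0. Qed.

Lemma rb_ok1_totally_real : (2 : F) != 0 -> totally_real F -> rb_ok n.+1 lam 1.
Proof.
move=> two TR R RB; have [R0|Rlam0] := rb_totally_real RB two TR.
  by exists 1%N; rewrite // R0 expr1 mul0r.
by exists 0%N; rewrite // Rlam0 expr1 mulr0.
Qed.

Lemma not_rb_ok0 : ~ rb_ok n.+1 lam 0.
Proof.
move=> /(_ _ is_RB0) [k]; rewrite leqn0 => /eqP-> /=.
by rewrite !expr0 mulr1 => /eqP; rewrite oner_eq0.
Qed.

End RotaBaxter.

Lemma not_rb_ok1 (F : fieldType) (n : nat) (lam : F) :
  quadratically_closed F -> ~ rb_ok n.+3 lam 1.
Proof.
move=> QC; have [i i2] : exists i : F, i ^+ 2 = -1.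
  have [i] := QC 1 0 1 (oner_neq0 F); rewrite mul1r mul0r addr0 => i2.
  by exists i; apply/eqP; rewrite -addr_eq0 i2.
pose i0 : 'I_n.+3 := ord0; pose i1 : 'I_n.+3 := Ordinal (isT : (1 < n.+3)%N).
pose u : 'rV[F]_n.+3 := delta_mx 0 i0 + i *: delta_mx 0 i1.
pose w : 'rV[F]_n.+3 := (1 - lam) *: delta_mx 0 i0 + i *: delta_mx 0 i1.
have uv v : dot u v = v 0 i0 + i * v 0 i1 by rewrite dotDl dotZl !dot_deltal.
have RB : is_RB lam (w^T *m u).
  by apply: outer_is_RB; rewrite ?uv !mxE /= ?mulr0 ?mulr1 ?addr0 ?add0r -?expr2 ?i2; ring.
move=> /(_ _ RB) [[|[|//]] _] /=; rewrite expr0 expr1 ?mul1r ?mulr1.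
  move=> /matrixP/(_ i0 i0); rewrite !mxE big_ord1 !mxE /=.
  by rewrite !(mulr1, mulr0, addr0) mulr1n subrK => /eqP; rewrite oner_eq0.
move=> /matrixP/(_ i1 i0); rewrite !mxE big_ord1 !mxE /=.
rewrite !(mulr0, mulr1, add0r, addr0) => i_eq0; move: i2.
by rewrite i_eq0 expr2 mul0r => /eqP; rewrite eq_sym oppr_eq0 oner_eq0.
Qed.

Theorem corollary3 (F : fieldType) (n : nat) (lam : F) :
  (0 < n)%N -> (2 : F) != 0 ->
  [/\ rb_le n lam 2,
      totally_real F -> rb_eq n lam 1
    & quadratically_closed F -> (3 <= n)%N -> rb_eq n lam 2].
Proof.
case: n => [//|n] _ two; split.
- by exists 2%N; last exact: rb_ok2.
- move=> TR; split; first exact: rb_ok1_totally_real.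
  by case=> // _; apply: not_rb_ok0.
- move=> QC; case: n => [|[|n]] // _; split; first exact: rb_ok2.
  by case=> [_|[_|//]]; [apply: not_rb_ok0 | apply: not_rb_ok1].
Qed.
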